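(* Let $r\ge6$ and $G\in\mathcal{G}(r,r)$. Then any two distinct configurations in $G$ are disjoint.
   Context: $\mathcal{G}(\Delta,\omega)$ denotes the class of finite simple graphs $G$ with maximum degree $\Delta(G)\le\Delta$ and clique number $\omega(G)\le\omega$. For $G\in\mathcal{G}(r,r)$, a configuration in $G$ is a set $C\subseteq V(G)$ with $|C|=r+1$ such that the induced subgraph $G[C]$ is a complete graph with exactly two edges missing. *)

From mathcomp Require Import all_boot.
Set Implicit Arguments. Unset Strict Implicit. Unset Printing Implicit Defensive.

Definition simple_graph (T : finType) (e : rel T) : Prop :=
  symmetric e /\ irreflexive e.

Definition nbhd (T : finType) (e : rel T) (x : T) : {set T} := [set y | e x y].
Definition degree (T : finType) (e : rel T) (x : T) : nat := #|nbhd e x|.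

Definition is_clique (T : finType) (e : rel T) (S : {set T}) : bool :=
  [forall x in S, forall y in S, (x != y) ==> e x y].

Definition in_class (T : finType) (e : rel T) (Delta omega : nat) : Prop :=
  simple_graph e /\
  (forall x : T, degree e x <= Delta) /\
  (forall S : {set T}, is_clique e S -> #|S| <= omega).

Definition missing_edges (T : finType) (e : rel T) (C : {set T}) : {set {set T}} :=
  [set [set x; y] | x in C, y in C & (x != y) && ~~ e x y].

Definition configuration (T : finType) (e : rel T) (r : nat) (C : {set T}) : Prop :=
  #|C| = r.+1 /\ #|missing_edges e C| = 2.

(* Suppose two configurations C <> D meet, and let k = |C :&: D|, so that
   1 <= k <= r. A vertex x of C :&: D has r other vertices in C and degree at
   most r, so each neighbour of x in D :\: C costs x a neighbour in C. Hence
   the k |D :\: C| pairs between C :&: D and D :\: C are covered by the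
   non-adjacent ordered pairs of C starting in C :&: D together with those of D
   starting in D :\: C. Exchanging C and D, no ordered non-adjacent pair of C
   or of D is used twice, so 2 k (r + 1 - k) <= 2 * 2 + 2 * 2, which fails for
   1 <= k <= r and r >= 6. *)

From mathcomp Require Import all_boot zify.

Set Implicit Arguments. Unset Strict Implicit. Unset Printing Implicit Defensive.

Section DoubleCounting.
Variable T : finType.

Lemma card_set_fibers (A : {set T}) (F : T -> {set T}) :
  #|[set p : T * T | (p.1 \in A) && (p.2 \in F p.1)]| = \sum_(x in A) #|F x|.
Proof.
rewrite -sum1_card (eq_bigr (fun x => \sum_(y in F x) 1)) => [|x _]; last first.
  by rewrite sum1_card.
by rewrite pair_big_dep; apply: eq_bigl => -[x y]; rewrite inE.
Qed.

Lemma sum_card_sym (R : rel T) (A B : {set T}) : symmetric R ->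
  \sum_(x in A) #|[set y in B | R x y]| = \sum_(y in B) #|[set x in A | R y x]|.
Proof.
move=> Rsym; rewrite -!card_set_fibers.
have swapK : involutive (fun p : T * T => (p.2, p.1)) by case.
rewrite -(card_imset _ (inv_inj swapK)); apply: eq_card => -[x y].
rewrite -[in LHS](swapK (x, y)) mem_imset; last exact: inv_inj swapK.
by rewrite !inE /= Rsym andbCA andbA.
Qed.
End DoubleCounting.

Section NonNeighbourhoods.
Variable T : finType.
Variable e : rel T.

Definition non_nbhd (C : {set T}) (x : T) : {set T} :=
  [set y in C | (x != y) && ~~ e x y].

Lemma non_nbhdS (B C : {set T}) (x : T) :
  B \subset C -> non_nbhd B x \subset non_nbhd C x.
Proof.
by move=> /subsetP BC; apply/subsetP => y; rewrite !inE => /andP [/BC -> ->].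
Qed.

(* A missing edge {x, y} is counted twice, as (x, y) and as (y, x); the
   boolean component of [tag] tells the two apart. *)
Lemma sum_card_non_nbhd (C : {set T}) :
  \sum_(x in C) #|non_nbhd C x| <= 2 * #|missing_edges e C|.
Proof.
rewrite -card_set_fibers.
pose tag (p : T * T) := ([set p.1; p.2], (enum_rank p.1 < enum_rank p.2)%N).
set P := [set p | _].
have tag_inj : {in P &, injective tag}.
  move=> [a b] [c d]; rewrite !inE /= => /and3P [_ _ /andP [ab _]].
  move=> /and3P [_ _ /andP [cd _]] [E R].
  have /set2P ac : a \in [set c; d] by rewrite -E set21.
  have /set2P bc : b \in [set c; d] by rewrite -E set22.
  case: ac bc ab R => -> [] -> //; rewrite ?eqxx //.
  move=> _; case: (ltngtP (enum_rank d) (enum_rank c)) => //.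
  by move=> /val_inj/enum_rank_inj dc _; rewrite dc eqxx in cd.
have tag_sub : [set tag p | p in P] \subset setX (missing_edges e C) [set: bool].
  apply/subsetP => q /imsetP [[a b]].
  rewrite !inE /= => /and3P [aC bC /andP [ab nab]] ->.
  by rewrite andbT; apply/imset2P; exists a b; rewrite // inE bC ab nab.
rewrite -(card_in_imset tag_inj); apply: leq_trans (subset_leq_card tag_sub) _.
by rewrite cardsX cardsT card_bool mulnC.
Qed.

Hypothesis e_sym : symmetric e.

Lemma sum_card_non_nbhd_sym (A B : {set T}) :
  \sum_(x in A) #|non_nbhd B x| = \sum_(y in B) #|non_nbhd A y|.
Proof. by apply: sum_card_sym => x y; rewrite eq_sym e_sym. Qed.

Hypothesis e_irr : irreflexive e.
Variable r : nat.
Hypothesis degree_le : forall x : T, degree e x <= r.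

Lemma card_le_non_nbhd (B C : {set T}) (x : T) :
  #|C| = r.+1 -> x \in C -> [disjoint B & C] ->
  #|B| <= #|non_nbhd C x| + #|non_nbhd B x|.
Proof.
move=> cardC xC dBC.
have xB : x \notin B by rewrite (disjointFl dBC xC).
have splitC : #|[set y in C | e x y]| + #|non_nbhd C x| = r.
  have := cardsD1 x C; rewrite xC cardC add1n => -[->].
  rewrite -(cardsID (nbhd e x) (C :\ x)); congr (_ + _); apply: eq_card => y.
    by rewrite !inE; case: eqVneq => [->|]; rewrite ?e_irr ?andbF.
  by rewrite !inE eq_sym; case: (y \in C); case: (y != x); case: (e x y).
have splitB : #|B| = #|[set y in B | e x y]| + #|non_nbhd B x|.
  rewrite -(cardsID (nbhd e x) B); congr (_ + _); apply: eq_card => y.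
    by rewrite !inE andbC.
  by rewrite !inE andbC; case: eqVneq => [<-|_] //; rewrite (negbTE xB) andbF.
have nbhd_x : #|[set y in C | e x y]| + #|[set y in B | e x y]| <= r.
  have disj : [disjoint [set y in C | e x y] & [set y in B | e x y]].
    have sub (A : {set T}) : [set y in A | e x y] \subset A.
      by apply/subsetP => y; rewrite inE => /andP [].
    by apply: disjointW (sub C) (sub B) _; rewrite disjoint_sym.
  move: disj; rewrite -(leq_card_setU _ _).2 => /eqP <-.
  apply: leq_trans (degree_le x); apply/subset_leq_card/subsetP => y.
  by rewrite !inE => /orP [] /andP [].
lia.
Qed.

Lemma overlap_bound (C D : {set T}) : #|C| = r.+1 ->
  #|C :&: D| * #|D :\: C| <=
  \sum_(x in C :&: D) #|non_nbhd C x| + \sum_(y in D :\: C) #|non_nbhd D y|.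
Proof.
move=> cardC; rewrite -sum_nat_const.
apply: leq_trans (_ : \sum_(x in C :&: D)
    (#|non_nbhd C x| + #|non_nbhd (D :\: C) x|) <= _).
  apply: leq_sum => x; rewrite inE => /andP [xC _].
  by apply: card_le_non_nbhd; rewrite // disjoints_subset subsetDr.
rewrite big_split leq_add2l (sum_card_non_nbhd_sym (C :&: D)).
by apply: leq_sum => y _; apply/subset_leq_card/non_nbhdS/subsetIr.
Qed.

Lemma overlap_missing_edges (C D : {set T}) : #|C| = r.+1 -> #|D| = r.+1 ->
  #|C :&: D| * (#|D :\: C| + #|C :\: D|) <=
  2 * (#|missing_edges e C| + #|missing_edges e D|).
Proof.
move=> cardC cardD; rewrite !mulnDr.
apply: leq_trans (leq_add (sum_card_non_nbhd C) (sum_card_non_nbhd D)).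
rewrite (big_setID D (A := C)) (big_setID C (A := D)) /= [D :&: C]setIC.
have := overlap_bound D cardC; have := overlap_bound C cardD.
rewrite [D :&: C]setIC; lia.
Qed.

End NonNeighbourhoods.

Theorem mainTheorem9 (r : nat) (T : finType) (e : rel T) :
  6 <= r -> in_class e r r ->
  forall C1 C2 : {set T},
    configuration e r C1 -> configuration e r C2 -> C1 != C2 ->
    [disjoint C1 & C2].
Proof.
move=> r_ge6 [[e_sym e_irr] [degree_le _]] C1 C2 [card1 miss1] [card2 miss2] C12.
rewrite -setI_eq0; apply: contraNT C12 => meet.
have k_gt0 : 0 < #|C1 :&: C2| by rewrite card_gt0.
have k_le : #|C1 :&: C2| <= r.+1 by rewrite -card1 subset_leq_card ?subsetIl.
have := overlap_missing_edges e_sym e_irr degree_le card1 card2.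
rewrite miss1 miss2 !cardsD card1 card2 [C2 :&: C1]setIC => bound.
have k_eq : #|C1 :&: C2| = r.+1 by nia.
have meet1 : C1 :&: C2 = C1 by apply/eqP; rewrite eqEcard subsetIl k_eq card1 /=.
have meet2 : C1 :&: C2 = C2 by apply/eqP; rewrite eqEcard subsetIr k_eq card2 /=.
by rewrite -meet1 meet2.
Qed.
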